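(* Let $F$ be an $m\times n$ binary matrix. Suppose that, after permuting rows and columns, $F = \left[\begin{array}{ll} A & B\end{array}\right]$ where $A$ is of order $m\times(n-b)$ and $B = O$ is the $m\times b$ zero matrix. Then: (a) if $w(F) = m+b$, then $v(F) = v(A) = \min(m, n-b)$; (b) if $w(A) > \max(m, n-b)$, then $w(F) > m+b$; (c) if $w(F) = m+b$, then $w(A) \leq \max(m, n-b)$.
   Context: A binary matrix is a matrix with entries $0$ or $1$. Some ones of a binary matrix are independent if no two lie in the same row or the same column; $v(F)$ is the maximum number of independent ones of $F$. $w(F)$ is the maximum of $a+b'$ over all $a\times b'$ submatrices of $F$ (formed by a set of $a$ rows and a set of $b'$ columns) all of whose entries are zero; if $F$ has no zero entry, $w(F)=0$. Both $v$ and $w$ are invariant under permutations of rows and columns. *)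

From mathcomp Require Import all_boot all_order all_fingroup all_algebra.
Set Implicit Arguments. Unset Strict Implicit. Unset Printing Implicit Defensive.

Definition indep_ones (m n : nat) (F : 'M[bool]_(m, n)) (S : {set 'I_m * 'I_n}) : bool :=
  [forall p in S, F p.1 p.2] &&
  [forall p in S, forall q in S, (p != q) ==> ((p.1 != q.1) && (p.2 != q.2))].

Definition vF (m n : nat) (F : 'M[bool]_(m, n)) : nat :=
  \max_(S : {set 'I_m * 'I_n} | indep_ones F S) #|S|.

Definition zero_sub (m n : nat) (F : 'M[bool]_(m, n)) (R : {set 'I_m}) (C : {set 'I_n}) : bool :=
  [forall i in R, forall j in C, ~~ F i j].

(* w(F): maximum of a + b' over all a x b' zero submatrices (a, b' >= 1);
   equals 0 when F has no zero entry (max over an empty range). *)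
Definition wF (m n : nat) (F : 'M[bool]_(m, n)) : nat :=
  \max_(RC : {set 'I_m} * {set 'I_n} |
          [&& RC.1 != set0, RC.2 != set0 & zero_sub F RC.1 RC.2])
     (#|RC.1| + #|RC.2|).

From mathcomp Require Import all_boot all_order all_fingroup all_algebra.
From mathcomp Require Import zify.
Set Implicit Arguments. Unset Strict Implicit. Unset Printing Implicit Defensive.

(* Permuting rows and columns preserves v and w, so we may take F = [A O].
   A zero R x C submatrix of A extends by the b zero columns to one of F, so
   w(F) <= m + b bounds every zero submatrix of A by m, and in any case by
   max(m, n - b); this gives (b) and (c).  By the Frobenius-Konig theorem,
   derived here from Hall's marriage theorem, an m x n matrix whose zero
   submatrices have at most n lines in total has m independent ones; applied
   to A or its transpose this gives v(A) = min(m, n - b).  Finally all ones of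
   F lie in A, so v(F) = v(A). *)

Section MatrixParameters.
Variables m n : nat.
Implicit Types (F : 'M[bool]_(m, n)) (S : {set 'I_m * 'I_n}).
Implicit Types (R : {set 'I_m}) (C : {set 'I_n}).

Lemma indep_onesP F S :
  reflect ((forall p, p \in S -> F p.1 p.2) /\
           {in S &, forall p q, p != q -> (p.1 != q.1) && (p.2 != q.2)})
          (indep_ones F S).
Proof.
apply: (iffP andP) => [[/forall_inP h1 /forall_inP h2] | [h1 h2]]; split => //.
- by move=> p q /h2 /forall_inP hp /hp /implyP.
- exact/forall_inP.
- by apply/forall_inP => p pS; apply/forall_inP => q qS; apply/implyP; apply: h2.
Qed.

Lemma zero_subP F R C :
  reflect (forall i j, i \in R -> j \in C -> ~~ F i j) (zero_sub F R C).
Proof.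
apply: (iffP forall_inP) => [h i j iR | h i iR].
  by move: (h i iR) => /forall_inP; apply.
by apply/forall_inP => j; apply: h.
Qed.

Lemma vF_le_rows F : vF F <= m.
Proof.
apply/bigmax_leqP => S /indep_onesP [_ hS].
have fst_inj : {in S &, injective fst}.
  by move=> p q pS qS eq1; apply/eqP/negPn/negP => /(hS p q pS qS); rewrite eq1 eqxx.
by rewrite -(card_in_imset fst_inj) (leq_trans (max_card _)) ?card_ord.
Qed.

Lemma leq_wF F R C : R != set0 -> C != set0 -> zero_sub F R C -> #|R| + #|C| <= wF F.
Proof.
move=> R0 C0 zRC.
apply: (@leq_bigmax_cond _ _ (fun RC : {set 'I_m} * {set 'I_n} => #|RC.1| + #|RC.2|) (R, C)).
by rewrite /= R0 C0.
Qed.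

Lemma wF_le F k : (forall R C, zero_sub F R C -> #|R| + #|C| <= k) -> wF F <= k.
Proof. by move=> hk; apply/bigmax_leqP => -[R C] /and3P [_ _ /hk]. Qed.

End MatrixParameters.

Section Submatrix.
Variables m n m' n' : nat.
Variables (f : 'I_m' -> 'I_m) (g : 'I_n' -> 'I_n).
Hypotheses (f_inj : injective f) (g_inj : injective g).

Lemma vF_mxsub (F : 'M[bool]_(m, n)) : vF (mxsub f g F) <= vF F.
Proof.
apply/bigmax_leqP => S /indep_onesP [hS1 hS2].
pose fg (p : 'I_m' * 'I_n') := (f p.1, g p.2).
have fg_inj : injective fg by move=> [i j] [k l] [/f_inj -> /g_inj ->].
rewrite -(card_imset S fg_inj); apply: leq_bigmax_cond; apply/indep_onesP; split.
  by move=> _ /imsetP [p pS ->]; have := hS1 p pS; rewrite mxE.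
move=> _ _ /imsetP [p pS ->] /imsetP [q qS ->] neq_img.
have /(hS2 p q pS qS) : p != q by apply: contra_neq neq_img => ->.
by rewrite /= (inj_eq f_inj) (inj_eq g_inj).
Qed.

Lemma wF_mxsub (F : 'M[bool]_(m, n)) : wF (mxsub f g F) <= wF F.
Proof.
apply/bigmax_leqP => [[R C]] /and3P [/= R0 C0 /zero_subP z].
rewrite -(card_imset R f_inj) -(card_imset C g_inj).
apply: leq_wF; rewrite ?imset_eq0 //.
by apply/zero_subP => _ _ /imsetP [i iR ->] /imsetP [j jC ->]; have := z i j iR jC; rewrite mxE.
Qed.

End Submatrix.

Section Permutation.
Variables (m n : nat) (s : 'S_m) (t : 'S_n) (F : 'M[bool]_(m, n)).

Lemma mxsub_permK : mxsub (s^-1)%g (t^-1)%g (mxsub s t F) = F.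
Proof. by rewrite -mxsub_comp mxsub_eq_id // => i /=; rewrite permKV. Qed.

Lemma vF_perm : vF (mxsub s t F) = vF F.
Proof.
apply/eqP; rewrite eqn_leq (vF_mxsub perm_inj perm_inj) /=.
by rewrite -[F in vF F <= _]mxsub_permK (vF_mxsub perm_inj perm_inj).
Qed.

Lemma wF_perm : wF (mxsub s t F) = wF F.
Proof.
apply/eqP; rewrite eqn_leq (wF_mxsub perm_inj perm_inj) /=.
by rewrite -[F in wF F <= _]mxsub_permK (wF_mxsub perm_inj perm_inj).
Qed.

End Permutation.

Section Transpose.
Variables (m n : nat).

Lemma zero_sub_tr (F : 'M[bool]_(m, n)) (R : {set 'I_m}) (C : {set 'I_n}) :
  zero_sub F^T C R = zero_sub F R C.
Proof.
apply/zero_subP/zero_subP => h i j iR jC; last by rewrite mxE; apply: h.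
by have := h j i jC iR; rewrite mxE.
Qed.

Lemma vF_tr_le (F : 'M[bool]_(m, n)) : vF F^T <= vF F.
Proof.
apply/bigmax_leqP => S /indep_onesP [hS1 hS2].
pose swap (p : 'I_n * 'I_m) := (p.2, p.1).
have swap_inj : injective swap by move=> [i j] [k l] [-> ->].
rewrite -(card_imset S swap_inj); apply: leq_bigmax_cond; apply/indep_onesP; split.
  by move=> _ /imsetP [p pS ->]; have := hS1 p pS; rewrite mxE.
move=> _ _ /imsetP [p pS ->] /imsetP [q qS ->] neq_img.
have /(hS2 p q pS qS) : p != q by apply: contra_neq neq_img => ->.
by rewrite andbC.
Qed.

End Transpose.

Lemma vF_tr m n (F : 'M[bool]_(m, n)) : vF F^T = vF F.
Proof. by apply/eqP; rewrite eqn_leq vF_tr_le -{1}(trmxK F) vF_tr_le. Qed.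

Lemma vF_le_cols m n (F : 'M[bool]_(m, n)) : vF F <= n.
Proof. by rewrite -vF_tr vF_le_rows. Qed.

Lemma disjoint_setD (T : finType) (A B : {set T}) : [disjoint A & B :\: A].
Proof. by rewrite disjoints_subset; apply/subsetP => x xA; rewrite !inE xA. Qed.

Section Hall.
Variables (I J : finType) (e : I -> J -> bool).
Implicit Types (X R : {set I}) (Y : {set J}) (M : {set I * J}).

Definition neighbours Y R := [set y in Y | [exists x in R, e x y]].

Definition hall_condition X Y := forall R, R \subset X -> #|R| <= #|neighbours Y R|.

Definition saturating_matching X Y M :=
  [/\ {in M, forall p, [&& p.1 \in X, p.2 \in Y & e p.1 p.2]},
      {in M &, forall p q, p != q -> (p.1 != q.1) && (p.2 != q.2)} &
      #|M| = #|X|].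

Lemma neighbours_sub Y R : neighbours Y R \subset Y.
Proof. by apply/subsetP => y; rewrite inE => /andP []. Qed.

Lemma hall_conditionS X X' Y : X' \subset X -> hall_condition X Y -> hall_condition X' Y.
Proof. by move=> sX'X hX R sRX'; apply/hX/(subset_trans sRX'). Qed.

Lemma hall_condition_critical X Y R :
  hall_condition X Y -> R \subset X -> #|neighbours Y R| <= #|R| ->
  hall_condition (X :\: R) (Y :\: neighbours Y R).
Proof.
move=> hX sRX critR S sS.
have sSR : S :|: R \subset X by rewrite subUset sRX (subset_trans sS) ?subsetDl.
have dSR : [disjoint S & R].
  by rewrite disjoint_sym (disjointWr sS) // disjoint_setD.
have sN : neighbours Y (S :|: R) \subset neighbours (Y :\: neighbours Y R) S :|: neighbours Y R.
  apply/subsetP => y; rewrite !inE => /andP [yY /exists_inP [x]].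
  rewrite inE yY /= => /orP [xS | xR] exy; case: (boolP [exists x0 in R, e x0 y]) => //= nRy.
  - by rewrite orbF; apply/exists_inP; exists x.
  - by case/negP: nRy; apply/exists_inP; exists x.
have := hX _ sSR; move: (subset_leq_card sN).
rewrite (cardsU S) (disjoint_setI0 dSR) cards0 subn0 => le1 le2.
by have := cardsU (neighbours (Y :\: neighbours Y R) S) (neighbours Y R); lia.
Qed.

Lemma hall_condition_surplus X Y x y :
  (forall R, R \subset X -> R != set0 -> R != X -> #|R| < #|neighbours Y R|) ->
  x \in X -> hall_condition (X :\ x) (Y :\ y).
Proof.
move=> surplus xX S sS.
have [-> | S0] := eqVneq S set0; first by rewrite cards0.
have sSX : S \subset X := subset_trans sS (subsetDl X [set x]).
have xS : x \notin S by apply/negP => /(subsetP sS); rewrite !inE eqxx.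
have SX : S != X by apply: contraNneq xS => ->.
have sN : neighbours Y S :\ y \subset neighbours (Y :\ y) S.
  by apply/subsetP => z; rewrite !inE => /andP [-> /andP [-> ->]].
have := subset_leq_card sN; have := cardsD1 y (neighbours Y S).
have := surplus S sSX S0 SX; have := leq_b1 (y \in neighbours Y S); lia.
Qed.

Lemma saturating_matchingU X1 X2 Y1 Y2 M1 M2 :
  [disjoint X1 & X2] -> [disjoint Y1 & Y2] ->
  saturating_matching X1 Y1 M1 -> saturating_matching X2 Y2 M2 ->
  saturating_matching (X1 :|: X2) (Y1 :|: Y2) (M1 :|: M2).
Proof.
move=> dX dY [e1 i1 c1] [e2 i2 c2].
have cross p q : p \in M1 -> q \in M2 -> (p.1 != q.1) && (p.2 != q.2).
  move=> /e1 /and3P [p1 p2 _] /e2 /and3P [q1 q2 _].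
  apply/andP; split.
    by apply: contraTneq q1 => <-; rewrite (disjointFr dX p1).
  by apply: contraTneq q2 => <-; rewrite (disjointFr dY p2).
have dM : [disjoint M1 & M2].
  apply/pred0P => p /=; apply/negbTE/negP => /andP [pM1 pM2].
  by have := cross p p pM1 pM2; rewrite eqxx.
split.
- by move=> p; rewrite inE => /orP [/e1 | /e2] /and3P [h1 h2 ->]; rewrite !inE h1 h2 ?orbT.
- move=> p q; rewrite !inE => /orP [pM | pM] /orP [qM | qM] pq.
  + exact: i1.
  + exact: cross.
  + by rewrite ![p.1 == _]eq_sym ![p.2 == _]eq_sym; apply: cross.
  + exact: i2.
- by rewrite !cardsU !disjoint_setI0 // !cards0 c1 c2.
Qed.

Lemma saturating_matching1 x y : e x y -> saturating_matching [set x] [set y] [set (x, y)].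
Proof.
move=> exy; split; last by rewrite !cards1.
  by move=> p /set1P -> /=; rewrite !inE !eqxx exy.
by move=> p q /set1P -> /set1P ->; rewrite eqxx.
Qed.

Lemma saturating_matching_neighbours X Y M :
  saturating_matching X Y M -> saturating_matching X (neighbours Y X) M.
Proof.
case=> hM iM cM; split => // p /hM /and3P [p1 p2 ep].
by rewrite p1 ep andbT inE p2 /=; apply/exists_inP; exists p.1.
Qed.

Theorem hall X Y : hall_condition X Y -> exists M, saturating_matching X Y M.
Proof.
move: {2}#|X|.+1 (ltnSn #|X|) => k; elim: k X Y => // k IH X Y ltXk hX.
rewrite ltnS in ltXk.
have [-> | [x xX]] := set_0Vmem X.
  by exists set0; split => [p | p q |]; rewrite ?inE ?cards0.
(* Halmos-Vaughan: split X at a tight proper subset if there is one;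
   otherwise every proper subset has a surplus neighbour, so any edge x y
   can be removed. *)
have [critical | no_critical] :=
  boolP [exists R : {set I}, [&& R \subset X, R != set0, R != X & #|neighbours Y R| <= #|R|]].
- case/existsP: critical => R /and4P [sRX R0 RX critR].
  have ltRX : #|R| < #|X| by rewrite proper_card // properEneq RX sRX.
  have ltDX : #|X :\: R| < #|X| by rewrite cardsDS // -card_gt0 in R0 *; lia.
  have [M1 hM1] := IH R Y (leq_trans ltRX ltXk) (hall_conditionS sRX hX).
  have [M2 hM2] := IH _ _ (leq_trans ltDX ltXk) (hall_condition_critical hX sRX critR).
  exists (M1 :|: M2).
  rewrite -(setID X R) (setIidPr sRX) -(setID Y (neighbours Y R)) (setIidPr (neighbours_sub Y R)).
  exact: saturating_matchingU (disjoint_setD _ _) (disjoint_setD _ _)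
                              (saturating_matching_neighbours hM1) hM2.
- have surplus R : R \subset X -> R != set0 -> R != X -> #|R| < #|neighbours Y R|.
    move=> sRX R0 RX; rewrite ltnNge; apply: contra no_critical => critR.
    by apply/existsP; exists R; rewrite sRX R0 RX critR.
  have /set0Pn [y] : neighbours Y [set x] != set0.
    by rewrite -card_gt0 (leq_trans _ (hX _ _)) ?cards1 ?sub1set.
  rewrite inE => /andP [yY /exists_inP [_ /set1P -> exy]].
  have ltDx : #|X :\ x| < #|X| by rewrite (cardsD1 x X) xX.
  have [M hM] := IH _ _ (leq_trans ltDx ltXk) (hall_condition_surplus y surplus xX).
  exists ((x, y) |: M); rewrite -(setD1K xX) -(setD1K yY).
  exact: saturating_matchingU (disjoint_setD _ _) (disjoint_setD _ _)
                              (saturating_matching1 exy) hM.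
Qed.

End Hall.

Lemma frobenius_konig m n (F : 'M[bool]_(m, n)) :
  (forall R C, zero_sub F R C -> #|R| + #|C| <= n) -> m <= vF F.
Proof.
move=> hzero.
have hF : hall_condition (fun i j => F i j) [set: 'I_m] [set: 'I_n].
  (* A violator R would leave the zero block R x (columns outside N(R)). *)
  move=> R _; rewrite leqNgt; apply/negP => ltNR.
  set N := neighbours _ _ R in ltNR.
  have : zero_sub F R (~: N).
    by apply/zero_subP => i j iR; rewrite !inE /= => /exists_inPn; apply.
  have cN : #|N| + #|~: N| = n by rewrite cardsC card_ord.
  by move/hzero; rewrite -[X in _ <= X]cN leq_add2r leqNgt ltNR.
have [M [hM iM cM]] := hall hF.
have cardM : #|M| = m by rewrite cM cardsT card_ord.
rewrite -[X in X <= _]cardM; apply: leq_bigmax_cond.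
by apply/indep_onesP; split => // p /hM /and3P [].
Qed.

Lemma minn_le_vF m n (F : 'M[bool]_(m, n)) :
  (forall R C, zero_sub F R C -> #|R| + #|C| <= maxn m n) -> minn m n <= vF F.
Proof.
move=> hzero; case: (leqP m n) => [mn | nm].
  by apply: frobenius_konig => R C /hzero; rewrite (maxn_idPr mn).
rewrite -vF_tr; apply: frobenius_konig => C R.
by rewrite zero_sub_tr addnC => /hzero; rewrite (maxn_idPl (ltnW nm)).
Qed.

Section ZeroBlock.
Variables (m n b : nat) (A : 'M[bool]_(m, n)).
Local Notation G := (row_mx A (const_mx false : 'M[bool]_(m, b))).

Lemma mxsub_lshift_row_mx0 : mxsub id (lshift b) G = A.
Proof. by apply/matrixP => i j; rewrite mxE row_mxEl. Qed.

Lemma vF_row_mx0 : vF G = vF A.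
Proof.
apply/eqP; rewrite eqn_leq andbC -[A in vF A <= _]mxsub_lshift_row_mx0.
rewrite (vF_mxsub (@inj_id _) (@lshift_inj _ _)) /=.
apply/bigmax_leqP => S /indep_onesP [hS1 hS2].
pose h (p : 'I_m * 'I_n) := (p.1, lshift b p.2).
have h_inj : injective h by move=> [i j] [k l] [-> /val_inj ->].
have sS : S \subset h @: (h @^-1: S).
  apply/subsetP => -[i j] ijS; have := hS1 _ ijS.
  case: (split_ordP j) ijS => [j' -> ijS _ | k -> _]; last by rewrite /= row_mxEr mxE.
  by apply/imsetP; exists (i, j'); rewrite ?inE.
rewrite (leq_trans (subset_leq_card sS)) // card_imset //; apply: leq_bigmax_cond.
apply/indep_onesP; split => [p | p q].
  by rewrite inE => /hS1 /=; rewrite row_mxEl.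
rewrite !inE => pS qS pq.
have /(hS2 _ _ pS qS) : h p != h q by rewrite (inj_eq h_inj).
by rewrite /= (inj_eq (@lshift_inj _ _)).
Qed.

Lemma leq_wF_row_mx0 (R : {set 'I_m}) (C : {set 'I_n}) :
  R != set0 -> C != set0 -> zero_sub A R C -> #|R| + #|C| + b <= wF G.
Proof.
move=> R0 C0 /zero_subP zRC.
pose C' := lshift b @: C :|: @rshift n b @: [set: 'I_b].
have dC' : [disjoint lshift b @: C & @rshift n b @: [set: 'I_b]].
  apply/pred0P => j /=; apply/negbTE/negP => /andP [/imsetP [x _ ->] /imsetP [y _ /eqP]].
  by rewrite eq_lrshift.
have cardC' : #|C'| = #|C| + b.
  rewrite cardsU (disjoint_setI0 dC') cards0 subn0 card_imset; last exact: lshift_inj.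
  by rewrite card_imset ?cardsT ?card_ord //; exact: rshift_inj.
rewrite -addnA -cardC'; apply: leq_wF => //.
  case/set0Pn: C0 => j jC; apply/set0Pn; exists (lshift b j).
  by rewrite inE (imset_f _ jC).
apply/zero_subP => i _ iR /setUP [/imsetP [j jC ->] | /imsetP [k _ ->]].
  by rewrite row_mxEl; exact: zRC.
by rewrite row_mxEr mxE.
Qed.

Lemma zero_sub_row_mx0_bound : wF G <= m + b ->
  forall R C, zero_sub A R C -> #|R| + #|C| <= maxn m n.
Proof.
move=> wG R C zRC.
have leRm : #|R| <= m by rewrite (leq_trans (max_card _)) ?card_ord.
have leCn : #|C| <= n by rewrite (leq_trans (max_card _)) ?card_ord.
have [-> | R0] := eqVneq R set0; first by rewrite cards0; lia.
have [-> | C0] := eqVneq C set0; first by rewrite cards0; lia.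
by have := leq_wF_row_mx0 R0 C0 zRC; lia.
Qed.

End ZeroBlock.

Theorem theorem39 (m n' b : nat) (F : 'M[bool]_(m, n' + b)) (A : 'M[bool]_(m, n'))
  (s : 'S_m) (t : 'S_(n' + b))
  (hperm : (\matrix_(i < m, j < n' + b) F (s i) (t j))%R
           = row_mx A (const_mx false : 'M[bool]_(m, b))) :
  (wF F = m + b -> vF F = vF A /\ vF A = minn m n') /\
  (wF A > maxn m n' -> wF F > m + b) /\
  (wF F = m + b -> wF A <= maxn m n').
Proof.
have eG : mxsub s t F = row_mx A (const_mx false : 'M[bool]_(m, b)) := hperm.
have vFA : vF F = vF A by rewrite -(vF_perm s t) eG vF_row_mx0.
have wFG : wF F = wF (row_mx A (const_mx false : 'M[bool]_(m, b))).
  by rewrite -(wF_perm s t) eG.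
have bound : wF F <= m + b -> forall R C, zero_sub A R C -> #|R| + #|C| <= maxn m n'.
  by rewrite wFG; exact: zero_sub_row_mx0_bound.
have wA_le : wF F <= m + b -> wF A <= maxn m n' by move=> /bound /wF_le.
split; [move=> wFe | split].
- split => //; apply/eqP; rewrite eqn_leq leq_min vF_le_rows vF_le_cols minn_le_vF //.
  by apply: bound; rewrite wFe.
- by rewrite !ltnNge; apply: contra.
- by move=> wFe; apply: wA_le; rewrite wFe.
Qed.
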